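(* Let $\Gamma_1$ be the path graph with vertices $a,b,c,d$ and edges $\{a,b\},\{b,c\},\{c,d\}$. Then $\vdash_{\Gamma_1} a,c\rhd d\rightarrow (d,b\rhd a\rightarrow b,c\rhd a,d)$.
   Context: For a finite simple undirected graph $\Gamma=(V,E)$, the border of $U\subseteq V$ is ${\cal B}(U)=\{v\in U\mid (v,w)\in E\text{ for some }w\in V\setminus U\}$, and a cut $(U,W)$ is a partition $V=U\sqcup W$. Formulas are built from $\bot$, atoms $A\rhd B$ ($A,B\subseteq V$) and $\rightarrow$; $A,B$ denotes $A\cup B$ and a vertex $v$ stands for $\{v\}$. $\vdash_\Gamma\phi$ means $\phi$ is derivable by Modus Ponens from propositional tautologies and the axioms: Reflexivity $A\rhd B$ for $B\subseteq A$; Augmentation $A\rhd B\rightarrow A,C\rhd B,C$; Transitivity $A\rhd B\rightarrow(B\rhd C\rightarrow A\rhd C)$; Contiguity $A,B\rhd C\rightarrow{\cal B}(U),{\cal B}(W),B\rhd C$ for every cut $(U,W)$ of $\Gamma$ with $A\subseteq U$, $C\subseteq W$. *)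

From mathcomp Require Import all_boot.
Set Implicit Arguments. Unset Strict Implicit. Unset Printing Implicit Defensive.

(* A finite simple undirected graph: vertex finType V, edge relation E
   (assumed symmetric and irreflexive where relevant). *)

Section Logic.
Variables (V : finType) (E : rel V).

Definition border (U : {set V}) : {set V} :=
  [set v in U | [exists w, (w \notin U) && E v w]].

Inductive formula : Type :=
| Bot : formula
| Atom : {set V} -> {set V} -> formula
| Imp : formula -> formula -> formula.

Fixpoint eval (val : {set V} -> {set V} -> bool) (phi : formula) : bool :=
  match phi with
  | Bot => false
  | Atom A B => val A B
  | Imp p q => eval val p ==> eval val q
  end.

Definition tautology (phi : formula) : Prop :=
  forall val, eval val phi.

Inductive derivable : formula -> Prop :=
| D_taut phi : tautology phi -> derivable phi
| D_refl (A B : {set V}) : B \subset A -> derivable (Atom A B)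
| D_aug (A B C : {set V}) :
    derivable (Imp (Atom A B) (Atom (A :|: C) (B :|: C)))
| D_trans (A B C : {set V}) :
    derivable (Imp (Atom A B) (Imp (Atom B C) (Atom A C)))
| D_contig (U A B C : {set V}) :
    (* cut (U, W) with W = complement of U *)
    A \subset U -> C \subset ~: U ->
    derivable (Imp (Atom (A :|: B) C)
                   (Atom (border U :|: border (~: U) :|: B) C))
| D_mp phi psi : derivable (Imp phi psi) -> derivable phi -> derivable psi.

End Logic.

(* The path graph Gamma_1 on vertices a=0, b=1, c=2, d=3 with edges
   {a,b}, {b,c}, {c,d}. *)
Definition path4 : rel 'I_4 :=
  fun i j => (i.+1 == j :> nat) || (j.+1 == i :> nat).

Definition va : 'I_4 := @Ordinal 4 0 isT.
Definition vb : 'I_4 := @Ordinal 4 1 isT.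
Definition vc : 'I_4 := @Ordinal 4 2 isT.
Definition vd : 'I_4 := @Ordinal 4 3 isT.

From mathcomp Require Import all_boot.

(* Cutting the path a - b - c - d between a,b and c,d exposes the border {b, c}
   in both cases, so contiguity turns a,c |> d into b,c |> d and d,b |> a into
   b,c |> a; the union rule of Armstrong's calculus then gives b,c |> a,d. *)

Section DerivedRules.
Variables (V : finType) (E : rel V).

Lemma derivable_imp_compose2 (p q x y z : formula V) :
  derivable E (Imp p x) -> derivable E (Imp q y) -> derivable E (Imp x (Imp y z)) ->
  derivable E (Imp p (Imp q z)).
Proof.
move=> px qy xyz.
have taut : derivable E (Imp (Imp p x) (Imp (Imp q y) (Imp (Imp x (Imp y z)) (Imp p (Imp q z))))).
  by apply: D_taut => val /=; case: (eval val p); case: (eval val q);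
     case: (eval val x); case: (eval val y); case: (eval val z).
exact: D_mp (D_mp (D_mp taut px) qy) xyz.
Qed.

Lemma derivable_union (A B C : {set V}) :
  derivable E (Imp (Atom A B) (Imp (Atom A C) (Atom A (B :|: C)))).
Proof.
have augA := D_aug E A B A; rewrite setUid setUC in augA.
have augB := D_aug E A C B; rewrite (setUC C) in augB.
exact: derivable_imp_compose2 augA augB (D_trans E A (A :|: B) (B :|: C)).
Qed.

Lemma derivable_contig_border (U A B C : {set V}) :
  A \subset U -> C \subset ~: U -> B \subset border E U :|: border E (~: U) ->
  derivable E (Imp (Atom (A :|: B) C) (Atom (border E U :|: border E (~: U)) C)).
Proof. by move=> sAU sCW /setUidPl <-; apply: D_contig. Qed.

End DerivedRules.

Lemma existsI4 (P : pred 'I_4) : [exists w, P w] = [|| P va, P vb, P vc | P vd].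
Proof.
apply/existsP/idP => [[[[|[|[|[|i]]]] lt_i4 Pi]] //|]; last first.
  by case/or4P => ?; [exists va | exists vb | exists vc | exists vd].
all: by move: Pi; rewrite (bool_irrelevance lt_i4 isT) => ->; rewrite ?orbT.
Qed.

Lemma border_cut_ab : border path4 [set va; vb] :|: border path4 (~: [set va; vb]) = [set vb; vc].
Proof. by apply/setP => -[[|[|[|[|i]]]] lt_i4] //; rewrite /border !inE !existsI4 !inE. Qed.

Lemma border_cut_cd : border path4 [set vc; vd] :|: border path4 (~: [set vc; vd]) = [set vb; vc].
Proof. by apply/setP => -[[|[|[|[|i]]]] lt_i4] //; rewrite /border !inE !existsI4 !inE. Qed.

Theorem proposition2 :
  derivable path4
    (Imp (Atom [set va; vc] [set vd])
         (Imp (Atom [set vd; vb] [set va])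
              (Atom [set vb; vc] [set va; vd]))).
Proof.
have contig_ab : derivable path4 (Imp (Atom [set va; vc] [set vd]) (Atom [set vb; vc] [set vd])).
  rewrite -border_cut_ab; apply: derivable_contig_border;
    by rewrite ?border_cut_ab sub1set !inE.
have contig_cd : derivable path4 (Imp (Atom [set vd; vb] [set va]) (Atom [set vb; vc] [set va])).
  rewrite -border_cut_cd; apply: derivable_contig_border;
    by rewrite ?border_cut_cd sub1set !inE.
have union := @derivable_union _ path4 [set vb; vc] [set vd] [set va].
rewrite [[set vd] :|: _]setUC in union.
exact: derivable_imp_compose2 contig_ab contig_cd union.
Qed.
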